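(* Let $|\Psi\rangle_{A\bar AE}$ be a pure (sub-)normalized state with $\mathcal H_A$ an $n$-qubit system. Let $\rho_{AE}:=\sum_z|z\rangle\langle z|_A\,{\rm Tr}_{\bar A}(|\Psi\rangle\langle\Psi|)\,|z\rangle\langle z|_A$ (the state after a $Z$-basis measurement of $A$), and define the phase distribution $\Pr(X=x):=\langle\tilde x|_A\rho^\Psi_A|\tilde x\rangle_A$ for $x\in\{0,1\}^n$, where $\rho^\Psi_A$ is the reduced state of $|\Psi\rangle$ on $A$. If $H_{1/2}(X)\le H^{\rm th}_{1/2}$ for a constant $H^{\rm th}_{1/2}$, then $$H_{\min}(\rho_{AE}|E)\ge n-H^{\rm th}_{1/2}.$$
   Context: $|z\rangle$ is the computational basis of $n$ qubits and $|\tilde x\rangle:=2^{-n/2}\sum_z(-1)^{x\cdot z}|z\rangle$. R\'enyi entropy of order $1/2$: $H_{1/2}(X):=2\log_2\sum_x\sqrt{\Pr(X=x)}$. $H_{\min}(\rho_{AE}|E)$ is the maximum $\lambda$ with $2^{-\lambda}I_A\otimes\sigma_E\ge\rho_{AE}$ for some normalized state $\sigma_E$. *)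

(* Complex scalars: an arbitrary numClosedFieldType C
   (e.g. algC); finite-dimensional Hilbert spaces are C^T for finTypes T,
   operators are functions T -> T -> C. *)
From HB Require Import structures.
From mathcomp Require Import all_boot all_order all_algebra.
Set Implicit Arguments. Unset Strict Implicit. Unset Printing Implicit Defensive.
Import Order.TTheory GRing.Theory Num.Theory.
Local Open Scope ring_scope.

Section Q.
Variable C : numClosedFieldType.

Definition op (T : finType) := T -> T -> C.

(* positive semidefinite: <v|M|v> >= 0 for all v (>= 0 in C means real, nonneg) *)
Definition psd (T : finType) (M : op T) : Prop :=
  forall v : T -> C, 0 <= \sum_i \sum_j (v i)^* * M i j * v j.

Definition trace (T : finType) (M : op T) : C := \sum_i M i i.

Definition is_state (T : finType) (M : op T) : Prop := psd M /\ trace M = 1.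

(* computational basis of n qubits: bit strings *)
Definition bits (n : nat) := {ffun 'I_n -> bool}.

Definition sgn_dot n (x z : bits n) : C := (-1) ^+ (\sum_i (x i && z i) : nat).

Definition phase_ket n (x : bits n) (z : bits n) : C :=
  sqrtC ((2 ^+ n)^-1) * sgn_dot x z.

Variables (n : nat) (TB TE : finType).
(* tripartite vector |Psi>_{A Abar E} with A = n qubits *)
Variable psi : bits n -> TB -> TE -> C.

Definition rhoA : op (bits n) :=
  fun a a' => \sum_b \sum_e psi a b e * (psi a' b e)^*.

Definition rhoAE_pre : op (bits n * TE)%type :=
  fun ae ae' => \sum_b psi ae.1 b ae.2 * (psi ae'.1 b ae'.2)^*.

Definition rhoAE : op (bits n * TE)%type :=
  fun ae ae' => (ae.1 == ae'.1)%:R * rhoAE_pre ae ae'.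

Definition phase_prob (x : bits n) : C :=
  \sum_z \sum_z' (phase_ket x z)^* * rhoA z z' * phase_ket x z'.

End Q.

Definition idA_tensor (C : numClosedFieldType) (TA TE : finType) (sigma : op C TE)
  : op C (TA * TE)%type :=
  fun ae ae' => (ae.1 == ae'.1)%:R * sigma ae.2 ae'.2.

From HB Require Import structures.
From mathcomp Require Import all_boot all_order all_algebra ring.
Import Order.TTheory GRing.Theory Num.Theory.
Set Implicit Arguments. Unset Strict Implicit. Unset Printing Implicit Defensive.
Local Open Scope ring_scope.

(* Apply the Hadamard transform to A: |Psi> = sum_x |x~>_A (x) |phi_x>, where
   |phi_x> has squared norm Pr(X = x).  With lam_x := sqrt Pr(X = x) and
   S := sum_x lam_x, take sigma_E := S^-1 sum_x lam_x^-1 Tr_Abar |phi_x><phi_x|.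
   The E-block of rho_AE at z is Tr_Abar |psi_z><psi_z| with
   psi_z = 2^{-n/2} sum_x (+-1) phi_x, and the Cauchy-Schwarz inequality with
   weights lam_x bounds it by 2^-n S^2 sigma_E.  Since S^2 = 2^{H_{1/2}(X)},
   this is the claimed min-entropy bound. *)

Section QuadraticForms.
Variable C : numClosedFieldType.

Lemma sumr_delta (T : finType) (a : T) (F : T -> C) :
  \sum_z (a == z)%:R * F z = F a.
Proof.
rewrite (bigD1 a) //= eqxx mul1r big1 ?addr0 // => z Hz.
by rewrite eq_sym (negbTE Hz) mul0r.
Qed.

Lemma cauchy_schwarz (I : finType) (a b : I -> C) :
  (\sum_i a i * (b i)^*) * (\sum_i a i * (b i)^*)^*
   <= (\sum_i a i * (a i)^*) * (\sum_i b i * (b i)^*).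
Proof.
pose T x y := a x * (a x)^* * (b y * (b y)^*).
pose L x y := a x * (b x)^* * (a y * (b y)^*)^*.
have -> : (\sum_i a i * (a i)^*) * (\sum_i b i * (b i)^*) = \sum_x \sum_y T x y.
  by rewrite mulr_suml; apply: eq_bigr => x _; rewrite mulr_sumr.
have -> : (\sum_i a i * (b i)^*) * (\sum_i a i * (b i)^*)^* = \sum_x \sum_y L x y.
  rewrite rmorph_sum /= mulr_suml; apply: eq_bigr => x _; rewrite mulr_sumr.
  by apply: eq_bigr => y _.
(* Lagrange's identity: the gap is half the sum of all |a_x b_y - a_y b_x|^2. *)
have lagrange x y : (a x * b y - a y * b x) * (a x * b y - a y * b x)^*
   = (T x y + T y x) - (L x y + L y x).
  by rewrite /T /L rmorphB !rmorphM /= !conjCK; ring.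
have gap_ge0 : 0 <= \sum_x \sum_y ((T x y + T y x) - (L x y + L y x)).
  apply: sumr_ge0 => x _; apply: sumr_ge0 => y _.
  by rewrite -lagrange mul_conjC_ge0.
rewrite -subr_ge0; move: gap_ge0.
under eq_bigr => x _ do rewrite sumrB !big_split /=.
rewrite sumrB !big_split /= [\sum_x \sum_y T y x]exchange_big.
rewrite [\sum_x \sum_y L y x]exchange_big.
have -> : forall u v : C, u + u - (v + v) = 2 * (u - v) by move=> u v; ring.
by rewrite pmulr_rge0.
Qed.

Lemma weighted_cauchy_schwarz (I : finType) (lam a g : I -> C) :
  (forall i, 0 <= lam i) -> (forall i, lam i = 0 -> g i = 0) ->
  (\sum_i a i * g i) * (\sum_i a i * g i)^*
   <= (\sum_i lam i * (a i * (a i)^*)) * \sum_i (lam i)^-1 * (g i * (g i)^*).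
Proof.
move=> lam_ge0 lam0_g0; pose s i := sqrtC (lam i).
have s_real i : (s i)^* = s i by rewrite geC0_conj // sqrtC_ge0.
have := cauchy_schwarz (fun i => a i * s i) (fun i => (g i / s i)^*).
have -> : \sum_i a i * s i * (g i / s i)^*^* = \sum_i a i * g i.
  apply: eq_bigr => i _; rewrite conjCK.
  have [l0|ln0] := eqVneq (lam i) 0.
    by rewrite lam0_g0 // /s l0 sqrtC0 !mul0r !mulr0.
  have sn0 : s i != 0 by rewrite sqrtC_eq0.
  by field.
congr (_ <= _ * _); apply: eq_bigr => i _.
  by rewrite rmorphM /= s_real mulrACA -expr2 sqrtCK mulrC.
rewrite conjCK rmorphM /= fmorphV /= s_real -[lam i]sqrtCK -/(s i) expr2 invfM.
ring.
Qed.

Definition qform (T : finType) (M : op C T) (w : T -> C) : C :=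
  \sum_i \sum_j (w i)^* * M i j * w j.

Lemma qformZ (T : finType) (c : C) (M : op C T) w :
  qform (fun i j => c * M i j) w = c * qform M w.
Proof.
rewrite /qform mulr_sumr; apply: eq_bigr => i _.
by rewrite mulr_sumr; apply: eq_bigr => j _; ring.
Qed.

Lemma qformB (T : finType) (M N : op C T) w :
  qform (fun i j => M i j - N i j) w = qform M w - qform N w.
Proof.
rewrite /qform -sumrB; apply: eq_bigr => i _.
by rewrite -sumrB; apply: eq_bigr => j _; ring.
Qed.

Lemma qform_sum (T I : finType) (M : I -> op C T) w :
  qform (fun i j => \sum_x M x i j) w = \sum_x qform (M x) w.
Proof.
rewrite /qform.
under eq_bigr => i _ do under eq_bigr => j _ do rewrite mulr_sumr mulr_suml.
by under eq_bigr => i _ do rewrite exchange_big; rewrite exchange_big.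
Qed.

Lemma qform_gram (TB TE : finType) (F : TB -> TE -> C) (w : TE -> C) :
  qform (fun e e' => \sum_b F b e * (F b e')^*) w =
  \sum_b (\sum_e (w e)^* * F b e) * (\sum_e (w e)^* * F b e)^*.
Proof.
rewrite qform_sum; apply: eq_bigr => b _.
rewrite rmorph_sum mulr_suml; apply: eq_bigr => e _.
rewrite mulr_sumr; apply: eq_bigr => e' _.
by rewrite rmorphM /= conjCK; ring.
Qed.

Lemma qform_blockdiag (A B : finType) (M : op C (A * B)%type)
    (N : A -> op C B) :
    (forall a a' e e', M (a, e) (a', e') = (a == a')%:R * N a e e') ->
  forall v, qform M v = \sum_a qform (N a) (fun e => v (a, e)).
Proof.
move=> HM v.
have sum_pair (F : A * B -> C) : \sum_p F p = \sum_a \sum_e F (a, e).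
  by rewrite (pair_bigA _ (fun a e => F (a, e))); apply: eq_bigr => -[].
rewrite /qform sum_pair; apply: eq_bigr => a _; apply: eq_bigr => e _.
have E a' e' : (v (a, e))^* * M (a, e) (a', e') * v (a', e')
  = (a == a')%:R * ((v (a, e))^* * N a e e' * v (a', e')) by rewrite HM; ring.
rewrite sum_pair; under eq_bigr => a' _ do under eq_bigr => e' _ do rewrite E.
by under eq_bigr => a' _ do rewrite -mulr_sumr; rewrite sumr_delta.
Qed.

Lemma psd_qform (T : finType) (M : op C T) : (forall w, 0 <= qform M w) -> psd M.
Proof. by []. Qed.

Definition basis_state (T : finType) (e0 : T) : op C T :=
  fun e e' => (e0 == e)%:R * (e0 == e')%:R.

Lemma basis_state_is_state (T : finType) (e0 : T) : is_state (basis_state e0).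
Proof.
split; last by rewrite /trace sumr_delta eqxx.
apply: psd_qform => w; rewrite /qform.
have E e e' : (w e)^* * basis_state e0 e e' * w e'
    = (e0 == e)%:R * ((e0 == e')%:R * ((w e)^* * w e')).
  by rewrite /basis_state; ring.
under eq_bigr => e _ do under eq_bigr => e' _ do rewrite E.
under eq_bigr => e _ do rewrite -mulr_sumr sumr_delta.
by rewrite sumr_delta mulrC mul_conjC_ge0.
Qed.

Lemma psd_idA_tensor_sub_rhoAE (n : nat) (TB TE : finType)
    (psi : bits n -> TB -> TE -> C) (c : C) (sigma : op C TE) :
    (forall a w, qform (fun e e' => rhoAE_pre psi (a, e) (a, e')) w
                   <= c * qform sigma w) ->
  psd (fun ae ae' => c * @idA_tensor C (bits n) TE sigma ae ae' - rhoAE psi ae ae').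
Proof.
move=> block_le; apply: psd_qform => v.
rewrite (qform_blockdiag (N := fun a e e' =>
  c * sigma e e' - rhoAE_pre psi (a, e) (a, e'))); last first.
  move=> a a' e e'; rewrite /idA_tensor /rhoAE /=.
  by case: eqP => [->|_]; [ring | rewrite !mul0r mulr0 subr0].
by rewrite sumr_ge0 // => a _; rewrite qformB qformZ subr_ge0 block_le.
Qed.

End QuadraticForms.

Section Hadamard.
Variables (C : numClosedFieldType) (n : nat).

Lemma sgn_dotE (x z : bits n) : sgn_dot C x z = \prod_i (-1) ^+ (x i && z i).
Proof.
apply: (big_morph (fun m : nat => (-1 : C) ^+ m)) => // u v.
by rewrite exprD.
Qed.

Lemma sgn_dot_orthogonal (z z' : bits n) :
  \sum_x sgn_dot C x z * sgn_dot C x z' = 2 ^+ n * (z == z')%:R.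
Proof.
under eq_bigr => x _ do rewrite !sgn_dotE -big_split /=.
rewrite -(bigA_distr_bigA (fun i (b : bool) =>
  (-1 : C) ^+ (b && z i) * (-1) ^+ (b && z' i))).
under eq_bigr => i _ do rewrite big_bool /= expr0 mulr1.
have [<-|nz] := eqVneq z z'.
  under eq_bigr => i _ do rewrite -expr2 sqrr_sign.
  by rewrite (prodr_const _ (1 + 1 : C)) card_ord mulr1.
rewrite /= mulr0.
have [i Hi] : exists i, z i != z' i.
  apply/existsP; move: nz; apply: contraNT; rewrite negb_exists => /forallP H.
  by apply/eqP/ffunP => i; apply/eqP; have := H i; rewrite negbK.
(* the i-th factor is 1 + (-1) = 0 *)
rewrite (bigD1 i) //=; move: Hi.
by case: (z i); case: (z' i) => //= _; rewrite ?expr0 ?expr1 ?mul1r ?mulr1 ?addNr ?mul0r.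
Qed.

Lemma exp2n_neq0 : (2 ^+ n : C) != 0.
Proof. by rewrite expf_neq0 // pnatr_eq0. Qed.

Lemma invexp2n_ge0 : 0 <= ((2 ^+ n)^-1 : C).
Proof. by rewrite invr_ge0 exprn_ge0 // ler0n. Qed.

Lemma phase_ket_conj (x z : bits n) : (phase_ket C x z)^* = phase_ket C x z.
Proof.
rewrite /phase_ket rmorphM /= /sgn_dot rmorphXn rmorphN1 geC0_conj //.
by rewrite sqrtC_ge0 invexp2n_ge0.
Qed.

Lemma phase_ket_sqr (x z : bits n) : phase_ket C x z * phase_ket C x z = (2 ^+ n)^-1.
Proof. by rewrite /phase_ket mulrACA -expr2 sqrtCK /sgn_dot -expr2 sqrr_sign mulr1. Qed.

Lemma phase_ket_orthogonal (z z' : bits n) :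
  \sum_x phase_ket C x z * phase_ket C x z' = (z == z')%:R.
Proof.
under eq_bigr => x _ do rewrite /phase_ket mulrACA -expr2 sqrtCK.
by rewrite -mulr_sumr sgn_dot_orthogonal mulrA mulVf ?mul1r // exp2n_neq0.
Qed.

End Hadamard.

Section PhaseAmplitudes.
Variables (C : numClosedFieldType) (n : nat) (TB TE : finType).
Variable psi : bits n -> TB -> TE -> C.

Definition phase_amp (x : bits n) (b : TB) (e : TE) : C :=
  \sum_z phase_ket C x z * psi z b e.

Lemma phase_amp_inv a b e : \sum_x phase_ket C x a * phase_amp x b e = psi a b e.
Proof.
under eq_bigr => x _ do rewrite mulr_sumr.
rewrite exchange_big /=.
under eq_bigr => z _ do
  (under eq_bigr => x _ do rewrite mulrA; rewrite -mulr_suml phase_ket_orthogonal).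
exact: sumr_delta.
Qed.

Lemma phase_probE x :
  phase_prob psi x = \sum_b \sum_e phase_amp x b e * (phase_amp x b e)^*.
Proof.
rewrite /phase_prob /rhoA.
under eq_bigr => z _ do under eq_bigr => z' _ do
  (rewrite mulr_sumr mulr_suml; under eq_bigr => b _ do rewrite mulr_sumr mulr_suml).
under eq_bigr => z _ do rewrite exchange_big.
under eq_bigr => z _ do under eq_bigr => b _ do rewrite exchange_big.
rewrite exchange_big; apply: eq_bigr => b _.
rewrite exchange_big; apply: eq_bigr => e _.
rewrite rmorph_sum mulr_suml; apply: eq_bigr => z _.
rewrite mulr_sumr; apply: eq_bigr => z' _.
by rewrite rmorphM /= !phase_ket_conj; ring.
Qed.

Lemma phase_prob_ge0 x : 0 <= phase_prob psi x.
Proof.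
rewrite phase_probE sumr_ge0 // => b _.
by rewrite sumr_ge0 // => e _; apply: mul_conjC_ge0.
Qed.

Lemma phase_amp_eq0 x b e : phase_prob psi x = 0 -> phase_amp x b e = 0.
Proof.
rewrite phase_probE => prob0.
have sum_b0 := psumr_eq0P
  (fun b' _ => sumr_ge0 _ (fun e' _ => mul_conjC_ge0 (phase_amp x b' e'))) prob0.
have sum_e0 := psumr_eq0P (fun e' _ => mul_conjC_ge0 (phase_amp x b e')) (sum_b0 b isT).
by apply/eqP; rewrite -mul_conjC_eq0 (sum_e0 e isT).
Qed.

End PhaseAmplitudes.

Section MarginalState.
Variables (C : numClosedFieldType) (n : nat) (TB TE : finType).
Variable psi : bits n -> TB -> TE -> C.

Definition phase_weight x : C := sqrtC (phase_prob psi x).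

Definition phase_weight_sum : C := \sum_x phase_weight x.

Definition amp_overlap (w : TE -> C) x b : C := \sum_e (w e)^* * phase_amp psi x b e.

Definition phase_energy (w : TE -> C) : C :=
  \sum_x (phase_weight x)^-1 * \sum_b amp_overlap w x b * (amp_overlap w x b)^*.

Definition sigmaE : op C TE := fun e e' =>
  phase_weight_sum^-1 *
  \sum_x (phase_weight x)^-1 * \sum_b phase_amp psi x b e * (phase_amp psi x b e')^*.

Lemma phase_weight_ge0 x : 0 <= phase_weight x.
Proof. by rewrite sqrtC_ge0 phase_prob_ge0. Qed.

Lemma phase_weight_sum_ge0 : 0 <= phase_weight_sum.
Proof. by rewrite sumr_ge0 // => x _; apply: phase_weight_ge0. Qed.

Lemma amp_overlap_eq0 w x b : phase_weight x = 0 -> amp_overlap w x b = 0.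
Proof.
move/eqP; rewrite sqrtC_eq0 => /eqP prob0.
by rewrite /amp_overlap big1 // => e _; rewrite phase_amp_eq0 // mulr0.
Qed.

Lemma phase_energy_ge0 w : 0 <= phase_energy w.
Proof.
rewrite sumr_ge0 // => x _; rewrite mulr_ge0 ?invr_ge0 ?phase_weight_ge0 //.
by rewrite sumr_ge0 // => b _; apply: mul_conjC_ge0.
Qed.

Lemma qform_sigmaE w : qform sigmaE w = phase_weight_sum^-1 * phase_energy w.
Proof.
rewrite qformZ qform_sum; congr (_ * _); apply: eq_bigr => x _.
by rewrite qformZ qform_gram.
Qed.

Lemma sigmaE_psd : psd sigmaE.
Proof.
apply: psd_qform => w; rewrite qform_sigmaE.
by rewrite mulr_ge0 ?invr_ge0 ?phase_weight_sum_ge0 ?phase_energy_ge0.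
Qed.

Lemma trace_sigmaE : phase_weight_sum != 0 -> trace sigmaE = 1.
Proof.
move=> S_neq0; rewrite /trace /sigmaE -mulr_sumr exchange_big /=.
under eq_bigr => x _ do rewrite -mulr_sumr exchange_big -phase_probE.
rewrite (eq_bigr phase_weight) ?mulVf // => x _.
have [->|wx_neq0] := eqVneq (phase_weight x) 0; first by rewrite invr0 mul0r.
by rewrite -[phase_prob psi x]sqrtCK -/(phase_weight x) expr2 mulKf.
Qed.

Lemma qform_block_le a w :
  qform (fun e e' => rhoAE_pre psi (a, e) (a, e')) w
   <= (2 ^+ n)^-1 * phase_weight_sum * phase_energy w.
Proof.
rewrite /rhoAE_pre /= qform_gram /phase_energy.
under [X in _ <= _ * X]eq_bigr => x _ do rewrite mulr_sumr.
rewrite exchange_big mulr_sumr ler_sum // => b _.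
have -> : \sum_e (w e)^* * psi a b e = \sum_x phase_ket C x a * amp_overlap w x b.
  under eq_bigr => e _ do rewrite -(phase_amp_inv psi a b e) mulr_sumr.
  rewrite exchange_big; apply: eq_bigr => x _; rewrite /amp_overlap mulr_sumr.
  by apply: eq_bigr => e _; ring.
apply: le_trans (weighted_cauchy_schwarz (fun x => phase_ket C x a)
  phase_weight_ge0 (fun x => @amp_overlap_eq0 w x b)) _.
suff -> : \sum_x phase_weight x * (phase_ket C x a * (phase_ket C x a)^*)
  = (2 ^+ n)^-1 * phase_weight_sum by [].
rewrite /phase_weight_sum mulr_sumr; apply: eq_bigr => x _.
by rewrite phase_ket_conj phase_ket_sqr mulrC.
Qed.

Lemma qform_block_le_sigmaE a w : phase_weight_sum != 0 ->
  qform (fun e e' => rhoAE_pre psi (a, e) (a, e')) w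
   <= (2 ^+ n)^-1 * phase_weight_sum ^+ 2 * qform sigmaE w.
Proof.
move=> S_neq0; apply: le_trans (qform_block_le a w) _.
suff -> : (2 ^+ n)^-1 * phase_weight_sum ^+ 2 * qform sigmaE w
  = (2 ^+ n)^-1 * phase_weight_sum * phase_energy w by [].
by rewrite qform_sigmaE; field; rewrite exp2n_neq0.
Qed.

End MarginalState.

Theorem mainTheorem6 (C : numClosedFieldType) (n : nat) (TB TE : finType)
  (HE : (0 < #|TE|)%N)
  (psi : bits n -> TB -> TE -> C)
  (Hsub : \sum_a \sum_b \sum_e psi a b e * (psi a b e)^* <= 1)
  (t : C) (Ht : 0 < t)
  (Hth : (\sum_x sqrtC (phase_prob psi x)) ^+ 2 <= t) :
  exists sigma : op C TE,
    is_state sigma /\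
    psd (fun ae ae' => t / 2 ^+ n * @idA_tensor C (bits n) TE sigma ae ae'
                       - rhoAE psi ae ae').
Proof.
have scale_ge0 : 0 <= t / 2 ^+ n by rewrite divr_ge0 ?exprn_ge0 ?ltW.
have [S0|S_neq0] := eqVneq (phase_weight_sum psi) 0.
  (* then every block of rho_AE vanishes and any state will do *)
  case/card_gt0P: HE => e0 _; exists (basis_state C e0).
  split; first exact: basis_state_is_state.
  apply: psd_idA_tensor_sub_rhoAE => a w; apply: le_trans (qform_block_le psi a w) _.
  rewrite S0 mulr0 mul0r; apply: mulr_ge0 => //; exact: (basis_state_is_state C e0).1.
exists (sigmaE psi); split; first by split; [exact: sigmaE_psd | exact: trace_sigmaE].
apply: psd_idA_tensor_sub_rhoAE => a w.
apply: le_trans (qform_block_le_sigmaE a w S_neq0) _.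
rewrite ler_wpM2r //; first by apply: sigmaE_psd.
rewrite [X in _ <= X]mulrC; apply: ler_wpM2l; [exact: invexp2n_ge0 | exact Hth].
Qed.
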